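(* Let $\mathcal{X}\subseteq\mathbb{R}^d$ be nonempty, closed and convex, let $f:\mathbb{R}^d\to\mathbb{R}$ be convex (not necessarily differentiable), and assume $\mathcal{X}_\star:=\operatorname{arg\,min}_{x\in\mathcal{X}}f(x)$ is nonempty. Assume there is $G>0$ with $\|g\|\le G$ for all $x\in\mathcal{X}$ and all $g\in\partial f(x)$. Let $x_\star\in\mathcal{X}_\star$ and $x_0\in\mathcal{X}$, and generate $\{x_k\}$ as follows: if $0\notin\partial f(x_k)$, pick $g_k\in\partial f(x_k)$, set $t_k:=\frac{f(x_k)-f(x_\star)}{\|g_k\|}$ and $x_{k+1}\in\operatorname{arg\,min}_{z\in\mathcal{X}\cap\mathcal{B}(x_k,t_k)}\langle g_k,z\rangle$; if $0\in\partial f(x_k)$, then $t_k=0$ and the method terminates. Then for every $K\ge1$, $$\frac1K\sum_{k=0}^{K-1}(f(x_k)-f(x_\star))^2\le\frac{G^2\|x_0-x_\star\|^2}{K},$$ and $\hat x_K:=\frac1K\sum_{k=0}^{K-1}x_k$ satisfies $f(\hat x_K)-f(x_\star)\le\frac{G\|x_0-x_\star\|}{\sqrt K}$.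
   Context: $\partial f(x)$ is the convex subdifferential of $f$ at $x$. $\|\cdot\|$ is the Euclidean norm, $\mathcal{B}(x,t):=\{y:\|y-x\|\le t\}$. With $t_k=0$ the feasible set is $\{x_k\}$, so a terminated run stays at $x_k$. *)

From HB Require Import structures.
From mathcomp Require Import all_boot all_order all_algebra.
From mathcomp Require Import all_classical all_reals all_analysis.
Set Implicit Arguments. Unset Strict Implicit. Unset Printing Implicit Defensive.
Import Order.TTheory GRing.Theory Num.Theory.
Import numFieldNormedType.Exports.
Local Open Scope ring_scope.
Local Open Scope classical_set_scope.

Section Defs.
Variables (R : realType) (d : nat).

Definition dotv (u v : 'rV[R]_d) : R := \sum_(i < d) u 0 i * v 0 i.
Definition enorm (u : 'rV[R]_d) : R := Num.sqrt (dotv u u).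

Definition eball (x : 'rV[R]_d) (t : R) : set 'rV[R]_d :=
  [set y | enorm (y - x) <= t].

Definition convex_fun (f : 'rV[R]_d -> R) : Prop :=
  forall x y (t : R), 0 <= t <= 1 ->
    f (t *: x + (1 - t) *: y) <= t * f x + (1 - t) * f y.

Definition subdiff (f : 'rV[R]_d -> R) (x : 'rV[R]_d) : set 'rV[R]_d :=
  [set g | forall y, f x + dotv g (y - x) <= f y].

Definition is_argmin_on (X : set 'rV[R]_d) (h : 'rV[R]_d -> R) (z : 'rV[R]_d) :=
  X z /\ forall y, X y -> h z <= h y.

End Defs.

(* Polyak's step t_k = (f x_k - f x_star) / |g_k| is chosen so that, by the
   subgradient inequality, x_star lies in the halfspace <g_k, y - x_k> <= - |g_k| t_k.
   Minimizing <g_k, .> over X intersected with the ball B(x_k, t_k) then yields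
   |x_{k+1} - x_star|^2 <= |x_k - x_star|^2 - t_k^2, and since
   (f x_k - f x_star)^2 <= G^2 t_k^2 the squared gaps telescope to at most
   G^2 |x_0 - x_star|^2.  The bound for the averaged iterate follows from Jensen's
   inequality and the Cauchy-Schwarz bound (sum r_k)^2 <= K sum r_k^2. *)

From HB Require Import structures.
From mathcomp Require Import all_boot all_order all_algebra.
From mathcomp Require Import all_classical all_reals all_analysis.
From mathcomp Require Import ring lra.
Set Implicit Arguments. Unset Strict Implicit. Unset Printing Implicit Defensive.
Import Order.TTheory GRing.Theory Num.Theory.
Import numFieldNormedType.Exports.
Local Open Scope ring_scope.
Local Open Scope classical_set_scope.

Section EuclideanSpace.
Variables (R : realType) (d : nat).
Implicit Types (u v w : 'rV[R]_d) (a t : R).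

Lemma dotvC u v : dotv u v = dotv v u.
Proof. by apply: eq_bigr => i _; rewrite mulrC. Qed.

Lemma dotvDl u v w : dotv (u + v) w = dotv u w + dotv v w.
Proof. by rewrite /dotv -big_split; apply: eq_bigr => i _; rewrite mxE mulrDl. Qed.

Lemma dotvZl a u v : dotv (a *: u) v = a * dotv u v.
Proof. by rewrite /dotv mulr_sumr; apply: eq_bigr => i _; rewrite mxE mulrA. Qed.

Lemma dotvNl u v : dotv (- u) v = - dotv u v.
Proof. by rewrite -scaleN1r dotvZl mulN1r. Qed.

Lemma dotvBl u v w : dotv (u - v) w = dotv u w - dotv v w.
Proof. by rewrite dotvDl dotvNl. Qed.

Lemma dotvDr u v w : dotv u (v + w) = dotv u v + dotv u w.
Proof. by rewrite dotvC dotvDl !(dotvC u). Qed.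

Lemma dotvZr a u v : dotv u (a *: v) = a * dotv u v.
Proof. by rewrite dotvC dotvZl dotvC. Qed.

Lemma dotvNr u v : dotv u (- v) = - dotv u v.
Proof. by rewrite dotvC dotvNl dotvC. Qed.

Lemma dotvBr u v w : dotv u (v - w) = dotv u v - dotv u w.
Proof. by rewrite dotvC dotvBl !(dotvC u). Qed.

Lemma dotvv_ge0 u : 0 <= dotv u u.
Proof. by apply: sumr_ge0 => i _; rewrite -expr2 sqr_ge0. Qed.

Lemma dotvv_eq0 u : dotv u u = 0 -> u = 0.
Proof.
move/psumr_eq0P => u0; apply/rowP => i; rewrite mxE; apply/eqP.
by rewrite -sqrf_eq0 expr2 u0 // => j _; rewrite -expr2 sqr_ge0.
Qed.

Lemma dotv0l v : dotv 0 v = 0.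
Proof. by rewrite -(scale0r 0) dotvZl mul0r. Qed.

Lemma enorm_sqr u : enorm u ^+ 2 = dotv u u.
Proof. by rewrite sqr_sqrtr // dotvv_ge0. Qed.

Lemma enorm_gt0 u : u != 0 -> 0 < enorm u.
Proof.
move=> /eqP u0; rewrite sqrtr_gt0 lt_neqAle dotvv_ge0 andbT eq_sym.
by apply/eqP => /dotvv_eq0.
Qed.

Lemma enorm_le u t : 0 <= t -> dotv u u <= t ^+ 2 -> enorm u <= t.
Proof. by move=> t0; rewrite -enorm_sqr ler_sqr // nnegrE sqrtr_ge0. Qed.

Lemma enorm_le_sqr u t : enorm u <= t -> dotv u u <= t ^+ 2.
Proof.
move=> ut; rewrite -enorm_sqr ler_sqr ?nnegrE ?sqrtr_ge0 //.
exact: le_trans (sqrtr_ge0 _) ut.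
Qed.

Lemma dotv_sqrD u v : dotv (u + v) (u + v) = dotv u u + 2 * dotv u v + dotv v v.
Proof. by rewrite !(dotvDl, dotvDr) (dotvC v u); ring. Qed.

Lemma dotv_sqrB u v : dotv (u - v) (u - v) = dotv u u - 2 * dotv u v + dotv v v.
Proof. by rewrite !(dotvBl, dotvBr) (dotvC v u); ring. Qed.

Lemma convex_set_comb (X : set 'rV[R]_d) u v s : convex_set X -> X u -> X v ->
  0 <= s <= 1 -> X (s *: u + (1 - s) *: v).
Proof.
move=> cX Xu Xv /andP[s0 s1].
by have := cX u v (Itv01 s0 s1); rewrite !inE; apply.
Qed.

End EuclideanSpace.

Lemma exists_small_step (R : realFieldType) (e b c : R) :
  0 <= e -> 0 <= c -> 0 < e \/ b < 0 ->
  exists2 s, 0 < s <= 1 & 2 * s * b + s ^+ 2 * c <= e.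
Proof.
move=> e0 c0 eb.
have fraction (p q : R) : 0 < p -> 0 < q -> exists2 s, 0 < s <= 1 & s * q <= p.
  move=> p0 q0; exists (Num.min 1 (p / q)).
    by rewrite lt_min ltr01 divr_gt0 //= ge_min lexx.
  by rewrite -ler_pdivlMr // ge_min lexx orbT.
have [b0|b0] := ltP b 0.
  have [s /andP[s0 s1] sc] := fraction (- b) (c + 1) ltac:(lra) ltac:(lra).
  by exists s; rewrite ?s0 ?s1 //; nra.
have e_gt0 : 0 < e by case: eb => //; lra.
have [s /andP[s0 s1] sc] := fraction e (2 * b + c + 1) e_gt0 ltac:(lra).
have ssc : s * (s * c) <= s * c by rewrite ler_piMl // mulr_ge0 // ltW.
by exists s; rewrite ?s0 ?s1 //; nra.
Qed.

Lemma argmin_ball_sqr_dist_le (R : realType) (d : nat) (X : set 'rV[R]_d)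
    (g xk y z : 'rV[R]_d) (t : R) :
  convex_set X -> g != 0 -> X y -> dotv g (y - xk) <= - (enorm g * t) ->
  is_argmin_on (X `&` eball xk t) (dotv g) z ->
  dotv (z - y) (z - y) <= dotv (xk - y) (xk - y) - t ^+ 2.
Proof.
(* Otherwise z could be moved towards y inside X and the ball, so <g, y - z> >= 0;
   then <g, z - xk> = - |g| t forces z - xk = - (t / |g|) g. *)
move=> cX g0 Xy gy [[Xz zB] zmin].
have q0 := enorm_gt0 g0; set q := enorm g in gy q0.
have gg : dotv g g = q ^+ 2 by rewrite enorm_sqr.
have t0 : 0 <= t := le_trans (sqrtr_ge0 _) zB.
have -> : z - y = (z - xk) - (y - xk) by rewrite opprB addrA subrK.
have -> : xk - y = - (y - xk) by rewrite opprB.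
rewrite dotv_sqrB dotvNl dotvNr opprK.
move: zB; rewrite /eball /= => /enorm_le_sqr uu.
set u := z - xk in zmin uu *; set v := y - xk in gy *.
have segment s : 0 <= s <= 1 -> dotv (u + s *: (v - u)) (u + s *: (v - u)) <= t ^+ 2 ->
    0 <= s * dotv g (v - u).
  move=> s01 sB.
  have Xp := convex_set_comb cX Xy Xz s01.
  have Bp : eball xk t (s *: y + (1 - s) *: z).
    rewrite /eball /=; apply: enorm_le => //.
    suff -> : s *: y + (1 - s) *: z - xk = u + s *: (v - u) by [].
    by apply/rowP => i; rewrite !mxE; ring.
  have := zmin _ (conj Xp Bp).
  suff -> : s *: y + (1 - s) *: z = z + s *: (v - u) by rewrite dotvDr dotvZr; lra.
  by apply/rowP => i; rewrite !mxE; ring.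
have [|uv] := lerP (dotv u u + t ^+ 2) (2 * dotv u v); first lra.
have [s /andP[s0 s1] sB] :
    exists2 s, 0 < s <= 1 & 2 * s * dotv u (v - u) + s ^+ 2 * dotv (v - u) (v - u)
                              <= t ^+ 2 - dotv u u.
  apply: exists_small_step; rewrite ?subr_ge0 ?dotvv_ge0 //.
  by rewrite dotvBr; have [] := ltP (dotv u u) (t ^+ 2); [left|right]; lra.
have gvu : 0 <= dotv g (v - u).
  rewrite -(pmulr_rge0 _ s0) segment ?(ltW s0) ?s1 //.
  by rewrite dotv_sqrD !(dotvZl, dotvZr); nra.
have gu : dotv g u <= - (q * t) by move: gvu; rewrite dotvBr; lra.
have qu : q *: u = - (t *: g).
  apply/eqP; rewrite -addr_eq0; apply/eqP/dotvv_eq0/eqP.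
  rewrite eq_le dotvv_ge0 andbT.
  have qt0 : 0 <= q * t by rewrite mulr_ge0 // ltW.
  have := sqr_ge0 q.
  rewrite dotv_sqrD !(dotvZl, dotvZr) gg (dotvC u g); nra.
have : q * dotv u v = - (t * dotv g v).
  by rewrite -dotvZl qu dotvNl dotvZl.
nra.
Qed.

Lemma convex_fun_mean (R : realType) (d : nat) (f : 'rV[R]_d -> R)
    (x : nat -> 'rV[R]_d) (n : nat) :
  convex_fun f ->
  f ((n.+1%:R)^-1 *: \sum_(k < n.+1) x k) <= (n.+1%:R)^-1 * \sum_(k < n.+1) f (x k).
Proof.
move=> cf; elim: n => [|n IH]; first by rewrite !big_ord1 invr1 scale1r mul1r.
rewrite big_ord_recr [X in _ <= _ * X]big_ord_recr /=.
set p : R := (n.+2%:R)^-1.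
have p01 : 0 <= p <= 1 by rewrite invr_ge0 ler0n invf_le1 ?ler1n.
have Ep : (1 - p) * (n.+1%:R)^-1 = p.
  by rewrite /p; field; rewrite -natrD nat1r !pnatr_eq0.
rewrite scalerDr mulrDr -{1}Ep -scalerA -{3}Ep -mulrA addrC [X in _ <= X]addrC.
apply: le_trans (cf _ _ _ p01) _; rewrite lerD2l ler_wpM2l //.
by case/andP: p01 => _; rewrite subr_ge0.
Qed.

Lemma sqr_sum_le (R : realFieldType) (n : nat) (r : nat -> R) :
  (\sum_(k < n) r k) ^+ 2 <= n%:R * \sum_(k < n) r k ^+ 2.
Proof.
elim: n => [|n IH]; first by rewrite !big_ord0 expr0n mul0r.
rewrite !big_ord_recr /= -[n.+1]addn1 natrD.
set S := \sum_(i < n) r i; set Q := \sum_(i < n) r i ^+ 2.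
rewrite -/S -/Q in IH.
have [n0|n_gt0] := eqVneq n 0%N.
  by rewrite /S /Q n0 !big_ord0 !add0r mul1r.
have n0 : (0 : R) < n%:R by rewrite ltr0n lt0n.
set N : R := n%:R in IH n0 *; set a := r n.
have : 0 <= N * (Q + N * a ^+ 2 - 2 * S * a).
  have := sqr_ge0 (S - N * a); nra.
rewrite pmulr_rge0 //; nra.
Qed.

Lemma mean_le_div_sqrt (R : rcfType) (n : nat) (r : nat -> R) (B : R) :
  0 <= B -> \sum_(k < n) r k ^+ 2 <= B ^+ 2 ->
  (n%:R)^-1 * \sum_(k < n) r k <= B / Num.sqrt n%:R.
Proof.
(* For n = 0 both sides are 0, since 0^-1 = 0. *)
move=> B0 rB; case: n => [|n] in r rB *.
  by rewrite big_ord0 mulr0 sqrtr0 invr0 mulr0.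
set s := Num.sqrt (n.+1%:R : R).
have s0 : 0 < s by rewrite sqrtr_gt0 ltr0n.
have sK : s ^+ 2 = n.+1%:R by rewrite sqr_sqrtr.
have sum_le : \sum_(k < n.+1) r k <= s * B.
  have : (\sum_(k < n.+1) r k) ^+ 2 <= (s * B) ^+ 2.
    by rewrite exprMn sK (le_trans (sqr_sum_le _ _)) // ler_wpM2l.
  have := mulr_ge0 (ltW s0) B0; nra.
have -> : B / s = (n.+1%:R)^-1 * (s * B) by rewrite -sK; field; exact: lt0r_neq0.
by rewrite ler_wpM2l // invr_ge0.
Qed.

Section PolyakIteration.
Variables (R : realType) (d : nat) (X : set 'rV[R]_d) (f : 'rV[R]_d -> R)
  (G : R) (xs : 'rV[R]_d) (x g : nat -> 'rV[R]_d).
Hypotheses (cX : convex_set X)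
  (subgrad_bounded : forall y gy, X y -> subdiff f y gy -> enorm gy <= G)
  (xs_min : is_argmin_on X f xs) (X_x0 : X (x 0%N))
  (polyak_step : forall k : nat,
     (subdiff f (x k) 0 -> x k.+1 = x k) /\
     (~ subdiff f (x k) 0 ->
        subdiff f (x k) (g k) /\
        is_argmin_on (X `&` eball (x k) ((f (x k) - f xs) / enorm (g k)))
                     (dotv (g k)) (x k.+1))).

Local Notation dist2 k := (dotv (x k - xs) (x k - xs)).

Lemma polyak_iterate_in k : X (x k).
Proof.
elim: k => // k Xk; have [stat|nstat] := pselect (subdiff f (x k) 0).
  by rewrite (polyak_step k).1.
by have [_ [[]]] := (polyak_step k).2 nstat.
Qed.

Lemma polyak_gap_ge0 k : 0 <= f (x k) - f xs.
Proof. by rewrite subr_ge0; apply: xs_min.2; apply: polyak_iterate_in. Qed.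

Lemma polyak_gap_sqr_le k : (f (x k) - f xs) ^+ 2 <= G ^+ 2 * (dist2 k - dist2 k.+1).
Proof.
have [stat|nstat] := pselect (subdiff f (x k) 0).
  have := stat xs; rewrite dotv0l addr0 => xk_le.
  have gap0 : f (x k) - f xs = 0 by have := polyak_gap_ge0 k; lra.
  by rewrite gap0 (polyak_step k).1 // subrr mulr0 expr0n.
have [sub zmin] := (polyak_step k).2 nstat.
have g0 : g k != 0 by apply/eqP => g0; apply: nstat; rewrite -g0.
have q0 := enorm_gt0 g0; set q := enorm (g k) in zmin q0.
set t := (f (x k) - f xs) / q in zmin.
have rqt : f (x k) - f xs = q * t by rewrite /t mulrC divfK ?lt0r_neq0.
clearbody t.
have decrease := argmin_ball_sqr_dist_le cX g0 xs_min.1 _ zmin.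
have qG : q <= G := subgrad_bounded (polyak_iterate_in k) sub.
have qG2 : q ^+ 2 <= G ^+ 2 by nra.
have gxs : dotv (g k) (xs - x k) <= - (q * t) by have := sub xs; rewrite -rqt; lra.
have := ler_wpM2l (sqr_ge0 G) (decrease gxs).
have := ler_wpM2r (sqr_ge0 t) qG2.
rewrite rqt exprMn; lra.
Qed.

Lemma sum_polyak_gap_sqr_le n :
  \sum_(k < n) (f (x k) - f xs) ^+ 2 <= G ^+ 2 * enorm (x 0%N - xs) ^+ 2.
Proof.
have telescope m : \sum_(k < m) (f (x k) - f xs) ^+ 2 <= G ^+ 2 * (dist2 0%N - dist2 m).
  elim: m => [|m IH]; first by rewrite big_ord0 subrr mulr0.
  by rewrite big_ord_recr /=; have := polyak_gap_sqr_le m; lra.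
apply: le_trans (telescope n) _; rewrite enorm_sqr ler_wpM2l ?sqr_ge0 //.
by rewrite gerBl dotvv_ge0.
Qed.

End PolyakIteration.

Theorem theorem6 (R : realType) (d : nat) (X : set 'rV[R]_d)
  (f : 'rV[R]_d -> R) (G : R) (xs : 'rV[R]_d)
  (x g : nat -> 'rV[R]_d) :
  X !=set0 -> closed X -> convex_set X ->
  convex_fun f ->
  0 < G ->
  (forall y gy, X y -> subdiff f y gy -> enorm gy <= G) ->
  is_argmin_on X f xs ->
  X (x 0%N) ->
  (forall k : nat,
     (subdiff f (x k) 0 -> x k.+1 = x k) /\
     (~ subdiff f (x k) 0 ->
        subdiff f (x k) (g k) /\
        is_argmin_on (X `&` eball (x k) ((f (x k) - f xs) / enorm (g k)))
                     (dotv (g k)) (x k.+1))) ->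
  forall K : nat, (1 <= K)%N ->
    (K%:R)^-1 * \sum_(k < K) (f (x k) - f xs) ^+ 2
      <= G ^+ 2 * enorm (x 0%N - xs) ^+ 2 / K%:R
    /\ f ((K%:R)^-1 *: \sum_(k < K) x k) - f xs
      <= G * enorm (x 0%N - xs) / Num.sqrt (K%:R).
Proof.
(* Closedness and nonemptiness of X only serve to make the iteration well defined. *)
move=> _ _ cX cf G0 bounded xs_min X_x0 step [//|n] _.
have sum_le := sum_polyak_gap_sqr_le cX bounded xs_min X_x0 step n.+1.
split; first by rewrite mulrC ler_wpM2r // invr_ge0.
have mean_gap : (n.+1%:R)^-1 * \sum_(k < n.+1) f (x k) - f xs
                = (n.+1%:R)^-1 * \sum_(k < n.+1) (f (x k) - f xs).
  by rewrite sumrB mulrBr sumr_const card_ord -[f xs *+ _]mulr_natl mulKf ?pnatr_eq0.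
apply: (@le_trans _ _ ((n.+1%:R)^-1 * \sum_(k < n.+1) (f (x k) - f xs))).
  rewrite -mean_gap lerD2r; exact: (convex_fun_mean x n cf).
apply: (@mean_le_div_sqrt _ n.+1 (fun k => f (x k) - f xs)).
  by rewrite mulr_ge0 ?sqrtr_ge0 ?(ltW G0).
by rewrite exprMn.
Qed.
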